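(* Let $n\in\mathbb N$, let $f(z)=\sum_{j\ge0}a_jz^j$ be extremal for $M_n$ with $a_0>0$, and let $P(z)=a_n+2\sum_{j=1}^na_{n-j}z^j$. Then every zero of $P$ lies in the annulus $\{z: 1\le|z|\le r\}$, where \[r=\frac1{a_0}\sqrt{\sum_{j=0}^{n-1}|a_j|^2+\frac{a_n^2}{4}}.\]
   Context: $\mathbb D$ is the open unit disc; $\mathcal B_0=\{f$ holomorphic on $\mathbb D: 0<|f|\le1\}$; $M_n(f)=\mathrm{Re}\,a_n$; $f\in\mathcal B_0$ is extremal for $M_n$ if $M_n(f)\ge M_n(F)$ for all $F\in\mathcal B_0$ (for such $f$, $a_n>0$). *)

From Stdlib Require Import Reals.
From Coquelicot Require Import Coquelicot.
Open Scope R_scope.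

Fixpoint sumR (f : nat -> R) (n : nat) : R :=
  match n with O => 0 | S m => sumR f m + f m end.
Fixpoint sumC (f : nat -> C) (n : nat) : C :=
  match n with O => RtoC 0 | S m => Cplus (sumC f m) (f m) end.

(* A holomorphic function on the open unit disc D is represented by its Taylor
   coefficient sequence a : nat -> C, f(z) = sum_j a_j z^j, the series
   converging on all of D. *)
Definition in_disc (z : C) : Prop := Cmod z < 1.

Definition B0 (a : nat -> C) : Prop :=
  forall z : C, in_disc z ->
    exists fz : C,
      (is_pseries (K := C_AbsRing) (V := C_NormedModule) a z fz) /\
      (0 < Cmod fz <= 1).

Definition Mn (n : nat) (a : nat -> C) : R := Re (a n).

Definition extremal (n : nat) (a : nat -> C) : Prop :=
  B0 a /\ forall b, B0 b -> Mn n b <= Mn n a.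

Definition Ppoly (n : nat) (a : nat -> C) (z : C) : C :=
  Cplus (a n) (Cmult (RtoC 2)
     (sumC (fun k => Cmult (a (n - S k)%nat) (Cpow z (S k))) n)).

From Stdlib Require Import Reals Lra Lia Psatz.
From Coquelicot Require Import Coquelicot.
Open Scope R_scope.

(* Extremality is used variationally: if a polynomial h has real part bounded
   below by a positive constant on the disc, then f (1 - e h) stays in B_0 for
   small e > 0, so maximality of Re a_n forces Re [h f]_n >= 0.  With h = 1 + i t
   this makes a_n real.  If P had a zero z0 inside the disc, take for h a long
   truncation of the Herglotz kernel (1 + z0 z) / (1 - z0 z), whose real part is
   at least (1 - |z0|^2) / 4, minus a small multiple eta z^n: then
   [h f]_n = P(z0) - eta a_0 = - eta a_0 < 0.  The outer bound is the
   Carmichael-Mason bound |z|^2 <= 1 + sum_(j<n) |b_j|^2 / |b_n|^2 applied to P,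
   whose leading coefficient is 2 a_0, by Cauchy-Schwarz and a geometric sum. *)

Lemma sumC_ext (f g : nat -> C) m :
  (forall k, (k < m)%nat -> f k = g k) -> sumC f m = sumC g m.
Proof.
  induction m as [|m IH]; intro Hfg; simpl; [reflexivity|].
  rewrite IH by (intros; apply Hfg; lia). rewrite Hfg by lia. reflexivity.
Qed.

Lemma sumC_sub (f g : nat -> C) m :
  sumC (fun k => f k - g k)%C m = (sumC f m - sumC g m)%C.
Proof. induction m as [|m IH]; simpl; [ring|]. rewrite IH; ring. Qed.

Lemma sumC_scal (c : C) (f : nat -> C) m :
  sumC (fun k => c * f k)%C m = (c * sumC f m)%C.
Proof. induction m as [|m IH]; simpl; [ring|]. rewrite IH; ring. Qed.

Lemma sumC_succ_l (f : nat -> C) m :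
  sumC f (S m) = (f 0%nat + sumC (fun k => f (S k)) m)%C.
Proof. induction m as [|m IH]; [simpl; ring|]. simpl in *. rewrite IH; ring. Qed.

Lemma sumC_eq_zero_from (f : nat -> C) l m :
  (l <= m)%nat -> (forall k, (l <= k < m)%nat -> f k = 0) -> sumC f m = sumC f l.
Proof.
  induction m as [|m IH]; intros Hlm Hf.
  - now replace l with 0%nat by lia.
  - destruct (Nat.eq_dec l (S m)) as [->|Hne]; [reflexivity|].
    simpl. rewrite Hf by lia. rewrite IH by (intros; try apply Hf; lia). ring.
Qed.

Lemma sumC_single (f : nat -> C) i m :
  (i < m)%nat -> (forall k, k <> i -> f k = 0) -> sumC f m = f i.
Proof.
  intros Him Hf. rewrite (sumC_eq_zero_from f (S i) m) by (try exact Him; intros; apply Hf; lia).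
  simpl. rewrite (sumC_eq_zero_from f 0 i) by (intros; try apply Hf; lia).
  simpl; ring.
Qed.

Lemma Cmod_sumC_le (f : nat -> C) m : Cmod (sumC f m) <= sumR (fun k => Cmod (f k)) m.
Proof.
  induction m as [|m IH]; simpl; [rewrite Cmod_0; lra|].
  eapply Rle_trans; [apply Cmod_triangle | lra].
Qed.

Lemma sumR_ext (f g : nat -> R) m :
  (forall k, (k < m)%nat -> f k = g k) -> sumR f m = sumR g m.
Proof.
  induction m as [|m IH]; intro Hfg; simpl; [reflexivity|].
  rewrite IH by (intros; apply Hfg; lia). rewrite Hfg by lia. reflexivity.
Qed.

Lemma sumR_nonneg (f : nat -> R) m : (forall k, 0 <= f k) -> 0 <= sumR f m.
Proof. intro Hf. induction m as [|m IH]; simpl; [lra|]. pose proof (Hf m); lra. Qed.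

Lemma sumR_scal c (f : nat -> R) m : sumR (fun k => c * f k) m = c * sumR f m.
Proof. induction m as [|m IH]; simpl; [ring|]. rewrite IH; ring. Qed.

Lemma sumR_succ_l (f : nat -> R) m : sumR f (S m) = f 0%nat + sumR (fun k => f (S k)) m.
Proof. induction m as [|m IH]; [simpl; ring|]. simpl in *. rewrite IH; ring. Qed.

Lemma sumR_rev (f : nat -> R) m : sumR (fun k => f (m - k)%nat) m = sumR (fun k => f (S k)) m.
Proof.
  revert f. induction m as [|m IH]; intro f; [reflexivity|].
  rewrite (sumR_succ_l (fun k => f (S k))).
  change (sumR ?F (S m)) with (sumR F m + F m); cbv beta.
  rewrite (sumR_ext _ (fun k => f (S (m - k)))) by (intros; f_equal; lia).
  rewrite (IH (fun j => f (S j))), Nat.sub_succ_l, Nat.sub_diag by lia. ring.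
Qed.

Lemma sumR_geometric x m : sumR (fun k => x ^ k) m * (x - 1) = x ^ m - 1.
Proof. induction m as [|m IH]; simpl; [ring|]. rewrite Rmult_plus_distr_r, IH; ring. Qed.

Lemma sumR_Cauchy_Schwarz (f g : nat -> R) m :
  sumR (fun k => f k * g k) m ^ 2 <=
  sumR (fun k => f k ^ 2) m * sumR (fun k => g k ^ 2) m.
Proof.
  set (A := sumR (fun k => f k ^ 2) m).
  set (B := sumR (fun k => f k * g k) m).
  set (D := sumR (fun k => g k ^ 2) m).
  assert (Hquad : forall t, 0 <= A - 2 * t * B + t ^ 2 * D).
  { intro t.
    replace (A - 2 * t * B + t ^ 2 * D) with (sumR (fun k => (f k - t * g k) ^ 2) m).
    - apply sumR_nonneg; intro; apply pow2_ge_0.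
    - unfold A, B, D; induction m as [|m IH]; simpl in *; [ring|]. rewrite IH; ring. }
  assert (HD : 0 <= D) by (apply sumR_nonneg; intro; apply pow2_ge_0).
  destruct (Req_dec D 0) as [HD0|HD0].
  - destruct (Req_dec B 0) as [HB0|HB0]; [rewrite HB0, HD0; lra|].
    specialize (Hquad ((A + 1) / (2 * B))). rewrite HD0 in Hquad.
    replace (2 * ((A + 1) / (2 * B)) * B) with (A + 1) in Hquad by (field; auto). lra.
  - specialize (Hquad (B / D)).
    replace (A - 2 * (B / D) * B + (B / D) ^ 2 * D) with ((A * D - B ^ 2) / D) in Hquad
      by (field; auto).
    assert (0 <= A * D - B ^ 2); [|lra].
    replace (A * D - B ^ 2) with ((A * D - B ^ 2) / D * D) by (field; auto).
    apply Rmult_le_pos; lra.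
Qed.

Lemma Re_le_Cmod (x : C) : Re x <= Cmod x.
Proof. eapply Rle_trans; [apply Rle_abs | apply re_le_Cmod]. Qed.

Lemma Cmod_real (x : C) : Im x = 0 -> Cmod x = Rabs (Re x).
Proof. destruct x as [u v]; simpl; intros ->; apply Cmod_R. Qed.

Lemma Re_sub_scal (x y : C) (e : R) : Re (x - e * y)%C = Re x - e * Re y.
Proof. destruct x, y; simpl; ring. Qed.

Lemma Im_sub_scal (x y : C) (e : R) : Im (x - e * y)%C = Im x - e * Im y.
Proof. destruct x, y; simpl; ring. Qed.

Local Notation is_pseriesC := (is_pseries (K := C_AbsRing) (V := C_NormedModule)).

Definition poly_eval (c : nat -> C) (K : nat) (z : C) : C :=
  sumC (fun j => c j * z ^ j)%C K.

Definition poly_mul_coef (c : nat -> C) (K : nat) (a : nat -> C) (k : nat) : C :=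
  sumC (fun j => c j * PS_incr_n (K := C_AbsRing) (V := C_NormedModule) a j k)%C K.

Lemma pow_n_Cpow (z : C) n : pow_n (K := C_AbsRing) z n = (z ^ n)%C.
Proof. induction n as [|n IH]; simpl; [reflexivity|]. now rewrite IH. Qed.

Lemma is_pseries_poly_mul (c : nat -> C) (K : nat) (a : nat -> C) (z s : C) :
  is_pseriesC a z s -> is_pseriesC (poly_mul_coef c K a) z (poly_eval c K z * s)%C.
Proof.
  intro Ha. induction K as [|K IH].
  - apply (is_pseries_ext (PS_scal (RtoC 0) a)).
    + intro k. unfold PS_scal, poly_mul_coef; simpl. change (scal ?x ?y) with (x * y)%C. ring.
    + replace (poly_eval c 0 z * s)%C with (scal (RtoC 0) s)
        by (unfold poly_eval; simpl; change (scal ?x ?y) with (x * y)%C; ring).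
      exact (is_pseries_scal _ _ _ _ (Cmult_comm _ _) Ha).
  - assert (Hshift := is_pseries_incr_n a K z s Ha).
    assert (HK := is_pseries_plus _ _ _ _ _ IH (is_pseries_scal (c K) _ _ _ (Cmult_comm _ _) Hshift)).
    replace (poly_eval c (S K) z * s)%C with
      (plus (poly_eval c K z * s)%C (scal (c K) (scal (pow_n z K) s))).
    + exact HK.
    + unfold poly_eval; simpl. rewrite pow_n_Cpow.
      repeat change (scal ?x ?y) with (x * y)%C. change (plus ?x ?y) with (x + y)%C. ring.
Qed.

Lemma Cmod_poly_eval_le (c : nat -> C) K z :
  Cmod z <= 1 -> Cmod (poly_eval c K z) <= sumR (fun j => Cmod (c j)) K.
Proof.
  intro Hz. eapply Rle_trans; [apply Cmod_sumC_le|].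
  induction K as [|K IH]; simpl; [lra|].
  rewrite Cmod_mult, Cmod_pow.
  assert (Cmod z ^ K <= 1) by (rewrite <- (pow1 K); apply pow_incr; split; [apply Cmod_ge_0 | exact Hz]).
  assert (0 <= Cmod z ^ K) by (apply pow_le, Cmod_ge_0).
  pose proof (Cmod_ge_0 (c K)). nra.
Qed.

Lemma poly_eval_sub (c1 c2 : nat -> C) K z :
  poly_eval (fun j => c1 j - c2 j)%C K z = (poly_eval c1 K z - poly_eval c2 K z)%C.
Proof.
  unfold poly_eval. rewrite <- sumC_sub. apply sumC_ext. intros; ring.
Qed.

Lemma poly_mul_coef_sub (c1 c2 : nat -> C) K a k :
  poly_mul_coef (fun j => c1 j - c2 j)%C K a k =
  (poly_mul_coef c1 K a k - poly_mul_coef c2 K a k)%C.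
Proof.
  unfold poly_mul_coef. rewrite <- sumC_sub. apply sumC_ext. intros; ring.
Qed.

Lemma poly_mul_coef_trunc (c a : nat -> C) K k :
  (k < K)%nat -> poly_mul_coef c K a k = poly_mul_coef c (S k) a k.
Proof.
  intro HkK. apply sumC_eq_zero_from; [lia|]. intros j Hj.
  rewrite PS_incr_n_simplify. destruct (Compare_dec.le_lt_dec j k); [lia|]. change zero with (RtoC 0). ring.
Qed.

Definition monomial (m : nat) (x : C) (j : nat) : C := if (j =? m)%nat then x else 0.

Lemma poly_eval_monomial m x K z :
  (m < K)%nat -> poly_eval (monomial m x) K z = (x * z ^ m)%C.
Proof.
  intro HmK. unfold poly_eval, monomial. rewrite (sumC_single _ m) by
    (auto; intros j Hj; apply Nat.eqb_neq in Hj; rewrite Hj; ring).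
  now rewrite Nat.eqb_refl.
Qed.

Lemma poly_mul_coef_monomial m x K (a : nat -> C) k :
  (m < K)%nat -> poly_mul_coef (monomial m x) K a k =
  (x * PS_incr_n (K := C_AbsRing) (V := C_NormedModule) a m k)%C.
Proof.
  intro HmK. unfold poly_mul_coef, monomial. rewrite (sumC_single _ m) by
    (auto; intros j Hj; apply Nat.eqb_neq in Hj; rewrite Hj; ring).
  now rewrite Nat.eqb_refl.
Qed.

Lemma Cmod_root_sq_le (b : nat -> C) n z :
  poly_eval b (S n) z = 0 ->
  Cmod (b n) ^ 2 * Cmod z ^ 2 <= Cmod (b n) ^ 2 + sumR (fun j => Cmod (b j) ^ 2) n.
Proof.
  unfold poly_eval; intro Hroot.
  set (r := Cmod z). set (B := Cmod (b n)). set (Sb := sumR (fun j => Cmod (b j) ^ 2) n).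
  assert (HSb : 0 <= Sb) by (apply sumR_nonneg; intro; apply pow2_ge_0).
  assert (Hr : 0 <= r) by apply Cmod_ge_0.
  destruct (Rle_lt_dec (r ^ 2) 1) as [Hr1|Hr1]; [nra|].
  assert (Hlead : B * r ^ n <= sumR (fun j => Cmod (b j) * r ^ j) n).
  { assert (Hbn : (b n * z ^ n = - sumC (fun j => b j * z ^ j) n)%C).
    { change (sumC ?f (S n)) with (sumC f n + f n)%C in Hroot.
      replace (b n * z ^ n)%C with (sumC (fun j => b j * z ^ j)%C n + b n * z ^ n
        - sumC (fun j => b j * z ^ j)%C n)%C by ring.
      rewrite Hroot; ring. }
    unfold B, r; rewrite <- Cmod_pow, <- Cmod_mult, Hbn, Cmod_opp.
    eapply Rle_trans; [apply Cmod_sumC_le|].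
    right; apply sumR_ext; intros; rewrite Cmod_mult, Cmod_pow; reflexivity. }
  assert (HCS := sumR_Cauchy_Schwarz (fun j => Cmod (b j)) (fun j => r ^ j) n).
  rewrite (sumR_ext (fun j => (r ^ j) ^ 2) (fun j => (r ^ 2) ^ j)) in HCS
    by (intros; rewrite <- !pow_mult, Nat.mul_comm; reflexivity).
  assert (HG := sumR_geometric (r ^ 2) n).
  set (G := sumR (fun j => (r ^ 2) ^ j) n) in *.
  set (X := (r ^ 2) ^ n) in *.
  assert (HX : X = (r ^ n) ^ 2) by (unfold X; rewrite <- !pow_mult, Nat.mul_comm; reflexivity).
  assert (HX1 : 1 <= X) by (unfold X; rewrite <- (pow1 n); apply pow_incr; lra).
  assert (Hlead2 : B ^ 2 * X <= Sb * G).
  { rewrite HX. assert (0 <= B * r ^ n) by (apply Rmult_le_pos; [apply Cmod_ge_0 | apply pow_le; lra]).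
    fold Sb in HCS. nra. }
  assert (B ^ 2 * X * (r ^ 2 - 1) <= Sb * X) by nra.
  assert (B ^ 2 * (r ^ 2 - 1) <= Sb) by nra.
  lra.
Qed.

Lemma Cmod_one_sub_scal_bounds (h : C) (e d M : R) :
  0 < e -> e * M ^ 2 < d -> d <= Re h -> Cmod h <= M ->
  0 < Cmod (1 - e * h)%C <= 1.
Proof.
  intros He HeM Hd HM.
  assert (HRe : Re h <= M) by (pose proof (Re_le_Cmod h); lra).
  assert (Hh2 : Re h ^ 2 + Im h ^ 2 <= M ^ 2)
    by (rewrite <- Cmod2_alt; pose proof (Cmod_ge_0 h); nra).
  assert (HeM1 : e * M < 1) by nra.
  split.
  - assert (0 < Re (1 - e * h)%C) by (rewrite Re_sub_scal; simpl (Re 1); nra).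
    pose proof (Re_le_Cmod (1 - e * h)%C); lra.
  - assert (Cmod (1 - e * h)%C ^ 2 <= 1); [|pose proof (Cmod_ge_0 (1 - e * h)%C); nra].
    rewrite Cmod2_alt, Re_sub_scal, Im_sub_scal. simpl (Re 1); simpl (Im 1). nra.
Qed.

Lemma B0_sub_scal_poly_mul (a c : nat -> C) K (e : R) :
  B0 a ->
  (forall z, in_disc z -> 0 < Cmod (1 - e * poly_eval c K z)%C <= 1) ->
  B0 (fun k => a k - e * poly_mul_coef c K a k)%C.
Proof.
  intros Ha Hfac z Hz.
  destruct (Ha z Hz) as [fz [Hfz Hbound]].
  exists (fz * (1 - e * poly_eval c K z))%C. split.
  - assert (Hmul := is_pseries_poly_mul c K a z fz Hfz).
    assert (Hsub := is_pseries_minus _ _ _ _ _ Hfz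
                      (is_pseries_scal (RtoC e) _ _ _ (Cmult_comm _ _) Hmul)).
    replace (fz * (1 - e * poly_eval c K z))%C
      with (plus fz (opp (scal (RtoC e) (poly_eval c K z * fz)%C))).
    + exact Hsub.
    + change (fz + - (e * (poly_eval c K z * fz)) = fz * (1 - e * poly_eval c K z))%C.
      ring.
  - destruct (Hfac z Hz), Hbound. rewrite Cmod_mult. split; nra.
Qed.

Lemma extremal_Re_poly_mul_coef_nonneg n (a c : nat -> C) K d :
  extremal n a -> 0 < d ->
  (forall z, in_disc z -> d <= Re (poly_eval c K z)) ->
  0 <= Re (poly_mul_coef c K a n).
Proof.
  intros [Ha Hmax] Hd HRe.
  set (M := sumR (fun j => Cmod (c j)) K).
  assert (Hbound : forall z, in_disc z -> Cmod (poly_eval c K z) <= M)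
    by (intros z Hz; apply Cmod_poly_eval_le; unfold in_disc in Hz; lra).
  assert (HdM : d <= M).
  { assert (Hin0 : in_disc 0) by (unfold in_disc; rewrite Cmod_0; lra).
    specialize (HRe 0 Hin0); specialize (Hbound 0 Hin0).
    pose proof (Re_le_Cmod (poly_eval c K 0)); lra. }
  set (e := d / (2 * M ^ 2)).
  assert (He : 0 < e) by (unfold e; apply Rdiv_lt_0_compat; nra).
  assert (HeM : e * M ^ 2 < d) by (replace (e * M ^ 2) with (d / 2) by (unfold e; field; lra); lra).
  assert (Hb : B0 (fun k => a k - e * poly_mul_coef c K a k)%C).
  { apply B0_sub_scal_poly_mul; [exact Ha|].
    intros z Hz. exact (Cmod_one_sub_scal_bounds _ e d M He HeM (HRe z Hz) (Hbound z Hz)). }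
  specialize (Hmax _ Hb). unfold Mn in Hmax. rewrite Re_sub_scal in Hmax. nra.
Qed.

Lemma extremal_Im_coef_eq0 n (a : nat -> C) : extremal n a -> Im (a n) = 0.
Proof.
  intro Hext.
  assert (Ht : forall t, 0 <= Re (a n) - t * Im (a n)).
  { intro t.
    assert (H := extremal_Re_poly_mul_coef_nonneg n a (fun _ => (1, t)) 1 1 Hext Rlt_0_1).
    replace (Re (a n) - t * Im (a n)) with (Re (poly_mul_coef (fun _ => (1, t)) 1 a n))
      by (unfold poly_mul_coef; simpl; destruct (a n); simpl; ring).
    apply H. intros z _. unfold poly_eval; simpl. lra. }
  destruct (Req_dec (Im (a n)) 0) as [H0|H0]; [exact H0|].
  specialize (Ht ((Re (a n) + 1) / Im (a n))).
  replace ((Re (a n) + 1) / Im (a n) * Im (a n)) with (Re (a n) + 1) in Ht by (field; exact H0).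
  lra.
Qed.

(* Coefficients of (1 + w z) / (1 - w z) = 1 + 2 sum_(j>=1) (w z)^j. *)
Definition herglotz_coef (w : C) (j : nat) : C := if (j =? 0)%nat then 1 else (2 * w ^ j)%C.

Lemma poly_mul_coef_herglotz w n (a : nat -> C) K :
  (n < K)%nat -> poly_mul_coef (herglotz_coef w) K a n = Ppoly n a w.
Proof.
  intro HnK. rewrite poly_mul_coef_trunc by exact HnK.
  unfold poly_mul_coef, Ppoly, herglotz_coef. rewrite sumC_succ_l, <- sumC_scal. cbn [Nat.eqb].
  rewrite PS_incr_n_simplify. destruct (Compare_dec.le_lt_dec 0 n); [|lia]. rewrite Nat.sub_0_r.
  f_equal; [ring|]. apply sumC_ext. intros k Hk.
  rewrite PS_incr_n_simplify. destruct (Compare_dec.le_lt_dec (S k) n); [|lia]. ring.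
Qed.

Lemma poly_eval_herglotz_mul w K z :
  (0 < K)%nat ->
  (poly_eval (herglotz_coef w) K z * (1 - w * z) = 1 + w * z - 2 * (w * z) ^ K)%C.
Proof.
  intro HK. destruct K as [|K]; [lia|]. clear HK.
  unfold poly_eval, herglotz_coef.
  induction K as [|K IH]; [cbn [sumC Nat.eqb Cpow]; ring|].
  change (sumC ?f (S (S K))) with (sumC f (S K) + f (S K))%C.
  rewrite Cmult_plus_distr_r, IH. cbn [Nat.eqb].
  rewrite !Cpow_mult_l. cbn [Cpow]. ring.
Qed.

Lemma Re_herglotz_trunc_ge (A w : C) K rho :
  Cmod w <= rho -> rho < 1 -> rho ^ K <= (1 - rho ^ 2) / 8 ->
  (A * (1 - w) = 1 + w - 2 * w ^ K)%C -> (1 - rho ^ 2) / 8 <= Re A.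
Proof.
  intros Hw Hrho HK HA.
  assert (HwK : Cmod (w ^ K)%C <= rho ^ K)
    by (rewrite Cmod_pow; apply pow_incr; split; [apply Cmod_ge_0 | exact Hw]).
  assert (Hw2 := Cmod2_alt w). assert (HwK2 := Cmod2_alt (w ^ K)%C).
  assert (0 <= Cmod w) by apply Cmod_ge_0. assert (0 <= Cmod (w ^ K)%C) by apply Cmod_ge_0.
  destruct (w ^ K)%C as [s t] eqn:Hu. destruct A as [p q], w as [x y]. simpl in *.
  assert (HRe : p * (1 - x) + q * y = 1 + x - 2 * s)
    by (apply (f_equal fst) in HA; simpl in HA; lra).
  assert (HIm : q * (1 - x) - p * y = y - 2 * t)
    by (apply (f_equal snd) in HA; simpl in HA; lra).
  set (D := (1 - x) ^ 2 + y ^ 2).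
  (* Re A |1 - w|^2 = 1 - |w|^2 - 2 Re (w^K (1 - conj w)), in coordinates. *)
  assert (Hkey : p * D = 1 - (x ^ 2 + y ^ 2) - 2 * (s * (1 - x) - t * y))
    by (unfold D; replace (p * ((1 - x) ^ 2 + y ^ 2))
          with ((1 - x) * (p * (1 - x) + q * y) - y * (q * (1 - x) - p * y)) by ring;
        rewrite HRe, HIm; ring).
  assert (Hxy : x ^ 2 + y ^ 2 <= rho ^ 2) by nra.
  assert (Hx : -1 < x < 1) by (split; nra).
  assert (HD : 0 < D <= 4) by (unfold D; split; nra).
  assert (Hcross : (s * (1 - x) - t * y) ^ 2 <= (2 * rho ^ K) ^ 2).
  { assert (s ^ 2 + t ^ 2 <= (rho ^ K) ^ 2) by nra.
    assert ((s * (1 - x) - t * y) ^ 2 <= (s ^ 2 + t ^ 2) * D)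
      by (unfold D; pose proof (pow2_ge_0 (s * y + t * (1 - x))); nra).
    nra. }
  assert (s * (1 - x) - t * y <= 2 * rho ^ K)
    by (assert (0 <= rho ^ K) by (apply pow_le; lra); nra).
  nra.
Qed.

Lemma Re_poly_eval_herglotz_sub_monomial_ge z0 n K eta z :
  Cmod z0 < 1 -> Cmod z0 ^ K <= (1 - Cmod z0 ^ 2) / 8 -> (n < K)%nat ->
  eta = (1 - Cmod z0 ^ 2) / 16 -> in_disc z ->
  eta <= Re (poly_eval (fun j => herglotz_coef z0 j - monomial n eta j)%C K z).
Proof.
  intros Hz0 HK HnK Heta Hz. unfold in_disc in Hz.
  rewrite poly_eval_sub, poly_eval_monomial, Re_sub_scal by exact HnK.
  assert (Hherg : (1 - Cmod z0 ^ 2) / 8 <= Re (poly_eval (herglotz_coef z0) K z)).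
  { apply (Re_herglotz_trunc_ge _ (z0 * z)%C K (Cmod z0)); [| exact Hz0 | exact HK |].
    - rewrite Cmod_mult. pose proof (Cmod_ge_0 z0); pose proof (Cmod_ge_0 z). nra.
    - apply poly_eval_herglotz_mul. lia. }
  assert (Re (z ^ n)%C <= 1).
  { eapply Rle_trans; [apply Re_le_Cmod|]. rewrite Cmod_pow, <- (pow1 n).
    apply pow_incr; split; [apply Cmod_ge_0 | lra]. }
  assert (0 < 1 - Cmod z0 ^ 2) by (pose proof (Cmod_ge_0 z0); nra).
  subst eta. nra.
Qed.

Lemma extremal_Ppoly_root_Cmod_ge1 n (a : nat -> C) z0 :
  extremal n a -> 0 < Re (a 0%nat) -> Ppoly n a z0 = 0 -> 1 <= Cmod z0.
Proof.
  intros Hext Ha0 Hroot.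
  destruct (Rle_lt_dec 1 (Cmod z0)) as [Hge|Hlt]; [exact Hge|exfalso].
  assert (Hgap : 0 < 1 - Cmod z0 ^ 2) by (pose proof (Cmod_ge_0 z0); nra).
  destruct (pow_lt_1_zero (Cmod z0) ltac:(rewrite Rabs_pos_eq by apply Cmod_ge_0; lra)
              ((1 - Cmod z0 ^ 2) / 8) ltac:(lra)) as [N HN].
  set (K := Nat.max N (S n)).
  assert (HK : Cmod z0 ^ K <= (1 - Cmod z0 ^ 2) / 8).
  { specialize (HN K ltac:(unfold K; lia)).
    rewrite Rabs_pos_eq in HN by (apply pow_le, Cmod_ge_0). lra. }
  assert (HnK : (n < K)%nat) by (unfold K; lia).
  set (eta := (1 - Cmod z0 ^ 2) / 16).
  assert (Heta : 0 < eta) by (unfold eta; lra).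
  assert (Hnonneg := extremal_Re_poly_mul_coef_nonneg n a _ K eta Hext Heta
    (fun z => Re_poly_eval_herglotz_sub_monomial_ge z0 n K eta z Hlt HK HnK eq_refl)).
  rewrite poly_mul_coef_sub, poly_mul_coef_herglotz, poly_mul_coef_monomial, Hroot in Hnonneg
    by exact HnK.
  rewrite PS_incr_n_simplify in Hnonneg. destruct (Compare_dec.le_lt_dec n n); [|lia].
  rewrite Nat.sub_diag, Re_sub_scal in Hnonneg. simpl (Re 0) in Hnonneg. nra.
Qed.

Lemma Ppoly_root_Cmod_le m (a : nat -> C) z :
  Im (a 0%nat) = 0 -> 0 < Re (a 0%nat) -> Im (a (S m)) = 0 -> Ppoly (S m) a z = 0 ->
  Cmod z <= / Re (a 0%nat) *
            sqrt (sumR (fun j => Cmod (a j) ^ 2) (S m) + Re (a (S m)) ^ 2 / 4).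
Proof.
  intros Him0 Ha0 Himn Hroot.
  set (b := fun j => if (j =? 0)%nat then a (S m) else (2 * a (S m - j)%nat)%C).
  assert (Hb : poly_eval b (S (S m)) z = 0).
  { rewrite <- Hroot. unfold poly_eval, Ppoly. rewrite sumC_succ_l, <- sumC_scal.
    unfold b; cbn [Nat.eqb]. f_equal; [simpl; ring|]. apply sumC_ext; intros; ring. }
  set (W := sumR (fun k => Cmod (a (S k)) ^ 2) m).
  assert (Hlead : Cmod (b (S m)) = 2 * Re (a 0%nat)).
  { unfold b; cbn [Nat.eqb]. rewrite Nat.sub_diag, Cmod_mult, Cmod_R, Cmod_real by exact Him0.
    rewrite !Rabs_pos_eq by lra. reflexivity. }
  assert (Hlower : sumR (fun j => Cmod (b j) ^ 2) (S m) = Re (a (S m)) ^ 2 + 4 * W).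
  { rewrite sumR_succ_l. unfold b; cbn [Nat.eqb].
    rewrite Cmod_real, pow2_abs by exact Himn. f_equal.
    rewrite (sumR_ext _ (fun k => 4 * Cmod (a (m - k)%nat) ^ 2))
      by (intros; rewrite Cmod_mult, Cmod_R, Rabs_pos_eq by lra; simpl; ring).
    rewrite sumR_scal, (sumR_rev (fun j => Cmod (a j) ^ 2)). reflexivity. }
  assert (Hall : sumR (fun j => Cmod (a j) ^ 2) (S m) = Re (a 0%nat) ^ 2 + W)
    by (rewrite sumR_succ_l, Cmod_real, pow2_abs by exact Him0; reflexivity).
  assert (HCM := Cmod_root_sq_le b (S m) z Hb).
  rewrite Hlead, Hlower in HCM. rewrite Hall.
  assert (Hr : 0 <= Cmod z) by apply Cmod_ge_0.
  apply (Rmult_le_reg_l (Re (a 0%nat))); [exact Ha0|].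
  rewrite <- Rmult_assoc, Rinv_r, Rmult_1_l by lra.
  rewrite <- (sqrt_pow2 (Re (a 0%nat) * Cmod z)) by nra. apply sqrt_le_1_alt. nra.
Qed.

Theorem lemma10 (n : nat) (a : nat -> C) :
  extremal n a ->
  Im (a 0%nat) = 0 -> 0 < Re (a 0%nat) ->
  forall z : C, Ppoly n a z = RtoC 0 ->
  1 <= Cmod z /\
  Cmod z <= / Re (a 0%nat) *
            sqrt (sumR (fun j => Cmod (a j) ^ 2) n + Re (a n) ^ 2 / 4).
Proof.
  intros Hext Him0 Ha0 z Hroot.
  destruct n as [|m].
  - assert (Ha0_eq : a 0%nat = 0) by (rewrite <- Hroot; unfold Ppoly; cbn [sumC]; ring).
    rewrite Ha0_eq in Ha0. simpl in Ha0. lra.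
  - split.
    + exact (extremal_Ppoly_root_Cmod_ge1 _ _ _ Hext Ha0 Hroot).
    + apply Ppoly_root_Cmod_le; [exact Him0 | exact Ha0 | | exact Hroot].
      exact (extremal_Im_coef_eq0 _ _ Hext).
Qed.
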